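(* Let $t_1,t_2$ be terms and suppose $\Gamma\vdash t_1t_2:\tau$ for some context $\Gamma$ and type $\tau$. Then either $t_2=\{t_2'\}$ for some closed term $t_2'$, or there are types $\tau',\tau''$ and disjoint contexts $\Gamma_1,\Gamma_2$ such that $\Gamma_1\vdash t_1:\tau'$ and $\Gamma_2\vdash t_2:\tau''$.
   Context: Types: $\rho,\tau::=\Diamond\mid\mathbf{B}\mid\tau\multimap\rho\mid\tau\otimes\rho\mid\tau\times\rho\mid\mathbf{L}(\tau)$. Raw terms: $r,s,t::=x^\tau\mid c\mid\lambda x^\tau.\,t\mid\langle t,s\rangle\mid ts\mid\{t\}$, where each variable $x^\tau$ carries a type (infinitely many variables of each type), application associates to the left, terms are identified up to renaming of bound variables ($\lambda$ is the only binder), and the constants $c$ with their types are $\mathsf{tt},\mathsf{ff}:\mathbf{B}$; $\mathsf{nil}_\tau:\mathbf{L}(\tau)$; $\mathsf{cons}_\tau:\Diamond\multimap\tau\multimap\mathbf{L}(\tau)\multimap\mathbf{L}(\tau)$; $\otimes_{\tau,\rho}:\tau\multimap\rho\multimap\tau\otimes\rho$. A context is a finite set of typed variables; $\Gamma_1,\Gamma_2$ denotes $\Gamma_1\cup\Gamma_2$ and presupposes $\Gamma_1\cap\Gamma_2=\emptyset$; $x^\tau$ also denotes $\{x^\tau\}$. The relation $\Gamma\vdash t:\tau$ is inductively defined by: (Var) $\Gamma,x^\tau\vdash x:\tau$; (Const) $\Gamma\vdash c:\tau$ for a constant $c$ of type $\tau$; ($\multimap^+$) from $\Gamma\cup\{x^\tau\}\vdash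 t:\rho$ infer $\Gamma\vdash\lambda x^\tau.t:\tau\multimap\rho$; ($\multimap^-$) from $\Gamma_1\vdash t:\tau\multimap\rho$ and $\Gamma_2\vdash s:\tau$ infer $\Gamma_1,\Gamma_2\vdash ts:\rho$; ($\times^+$) from $\Gamma\vdash t:\tau$ and $\Gamma\vdash s:\rho$ infer $\Gamma\vdash\langle t,s\rangle:\tau\times\rho$; ($\times^-_1$) from $\Gamma\vdash t:\tau\times\rho$ infer $\Gamma\vdash t\,\mathsf{tt}:\tau$; ($\times^-_0$) from $\Gamma\vdash t:\tau\times\rho$ infer $\Gamma\vdash t\,\mathsf{ff}:\rho$; ($\mathbf{B}^-$) from $\Gamma_1\vdash t:\mathbf{B}$, $\Gamma_2\vdash s:\tau$, $\Gamma_2\vdash r:\tau$ infer $\Gamma_1,\Gamma_2\vdash t\langle s,r\rangle:\tau$; ($\otimes^-$) from $\Gamma_1\vdash t:\tau\otimes\rho$ and $\Gamma_2,x^\tau,y^\rho\vdash s:\sigma$ infer $\Gamma_1,\Gamma_2\vdash t(\lambda x^\tau.\lambda y^\rho.s):\sigma$; ($\mathbf{L}^-$) from $\Gamma\vdash t:\mathbf{L}(\tau)$ and $\emptyset\vdash s:\Diamond\multimap\tau\multimap\rho\multimap\rho$ infer $\Gamma\vdash t\{s\}:\rho\multimap\rho$. A term is closed if it has no free variables. *)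

From HB Require Import structures.
From mathcomp Require Import all_boot.
From mathcomp Require Import finmap.
Set Implicit Arguments. Unset Strict Implicit. Unset Printing Implicit Defensive.
Local Open Scope fset_scope.

Inductive ty : Type :=
| TDiam | TBool | TLolli of ty & ty | TTens of ty & ty | TProd of ty & ty | TList of ty.

Fixpoint enc_ty (t : ty) : GenTree.tree nat :=
  match t with
  | TDiam => GenTree.Node 0 [::]
  | TBool => GenTree.Node 1 [::]
  | TLolli a b => GenTree.Node 2 [:: enc_ty a; enc_ty b]
  | TTens a b => GenTree.Node 3 [:: enc_ty a; enc_ty b]
  | TProd a b => GenTree.Node 4 [:: enc_ty a; enc_ty b]
  | TList a => GenTree.Node 5 [:: enc_ty a]
  end.

Fixpoint dec_ty (x : GenTree.tree nat) : option ty :=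
  match x with
  | GenTree.Node 0 [::] => Some TDiam
  | GenTree.Node 1 [::] => Some TBool
  | GenTree.Node 2 [:: a; b] =>
      match dec_ty a, dec_ty b with Some a, Some b => Some (TLolli a b) | _, _ => None end
  | GenTree.Node 3 [:: a; b] =>
      match dec_ty a, dec_ty b with Some a, Some b => Some (TTens a b) | _, _ => None end
  | GenTree.Node 4 [:: a; b] =>
      match dec_ty a, dec_ty b with Some a, Some b => Some (TProd a b) | _, _ => None end
  | GenTree.Node 5 [:: a] =>
      match dec_ty a with Some a => Some (TList a) | _ => None end
  | _ => None
  end.

Lemma enc_tyK : pcancel enc_ty dec_ty.
Proof. by elim=> //= [a -> b ->|a -> b ->|a -> b ->|a ->]. Qed.

HB.instance Definition _ := Countable.copy ty (pcan_type enc_tyK).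

Definition var : Type := (nat * ty)%type.
Definition var_ty (x : var) : ty := x.2.

Definition ctx := {fset var}.

Inductive const : Type :=
| Ctt | Cff | Cnil of ty | Ccons of ty | Ctens of ty & ty.

Definition const_ty (c : const) : ty :=
  match c with
  | Ctt | Cff => TBool
  | Cnil t => TList t
  | Ccons t => TLolli TDiam (TLolli t (TLolli (TList t) (TList t)))
  | Ctens t r => TLolli t (TLolli r (TTens t r))
  end.

(* Raw terms up to renaming of bound variables, in locally nameless form:
   free variables are named typed variables, bound ones are de Bruijn indices;
   the λ-binder carries the type of its bound variable. *)
Inductive term : Type :=
| Fvar of var
| Bvar of nat
| Const of const
| Lam of ty & term
| Pair of term & term
| App of term & term
| Brace of term.

Fixpoint fv (t : term) : {fset var} :=
  match t with
  | Fvar x => [fset x]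
  | Bvar _ | Const _ => fset0
  | Lam _ b => fv b
  | Pair a b | App a b => fv a `|` fv b
  | Brace a => fv a
  end.

Fixpoint open_rec (k : nat) (u : term) (t : term) : term :=
  match t with
  | Bvar i => if i == k then u else Bvar i
  | Fvar x => Fvar x
  | Const c => Const c
  | Lam T b => Lam T (open_rec k.+1 u b)
  | Pair a b => Pair (open_rec k u a) (open_rec k u b)
  | App a b => App (open_rec k u a) (open_rec k u b)
  | Brace a => Brace (open_rec k u a)
  end.

Definition open (t : term) (x : var) : term := open_rec 0 (Fvar x) t.

(* no dangling de Bruijn index (i.e. the term is a genuine raw term) *)
Fixpoint lc_at (k : nat) (t : term) : Prop :=
  match t with
  | Bvar i => i < k
  | Fvar _ | Const _ => True
  | Lam _ b => lc_at k.+1 b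
  | Pair a b | App a b => lc_at k a /\ lc_at k b
  | Brace a => lc_at k a
  end.

Definition closed_term (t : term) : Prop := lc_at 0 t /\ fv t = fset0.

Inductive typed : ctx -> term -> ty -> Prop :=
| T_Var (G : ctx) (x : var) :
    x \in G -> typed G (Fvar x) (var_ty x)
| T_Const (G : ctx) (c : const) :
    typed G (Const c) (const_ty c)
| T_LolliI (G : ctx) (T R : ty) (b : term) (n : nat) :
    (n, T) \notin fv b ->
    typed (G `|` [fset (n, T)]) (open b (n, T)) R ->
    typed G (Lam T b) (TLolli T R)
| T_LolliE (G1 G2 : ctx) (t s : term) (T R : ty) :
    fdisjoint G1 G2 ->
    typed G1 t (TLolli T R) -> typed G2 s T ->
    typed (G1 `|` G2) (App t s) R
| T_ProdI (G : ctx) (t s : term) (T R : ty) :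
    typed G t T -> typed G s R -> typed G (Pair t s) (TProd T R)
| T_ProdE1 (G : ctx) (t : term) (T R : ty) :
    typed G t (TProd T R) -> typed G (App t (Const Ctt)) T
| T_ProdE0 (G : ctx) (t : term) (T R : ty) :
    typed G t (TProd T R) -> typed G (App t (Const Cff)) R
| T_BoolE (G1 G2 : ctx) (t s r : term) (T : ty) :
    fdisjoint G1 G2 ->
    typed G1 t TBool -> typed G2 s T -> typed G2 r T ->
    typed (G1 `|` G2) (App t (Pair s r)) T
| T_TensE (G1 G2 : ctx) (t b : term) (T R S : ty) (x y : var) :
    fdisjoint G1 G2 ->
    var_ty x = T -> var_ty y = R -> x != y ->
    x \notin G2 -> y \notin G2 ->
    x \notin fv b -> y \notin fv (open_rec 1 (Fvar x) b) ->
    typed G1 t (TTens T R) ->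
    typed (G2 `|` [fset x] `|` [fset y]) (open_rec 0 (Fvar y) (open_rec 1 (Fvar x) b)) S ->
    typed (G1 `|` G2) (App t (Lam T (Lam R b))) S
| T_ListE (G : ctx) (t s : term) (T R : ty) :
    typed G t (TList T) ->
    typed fset0 s (TLolli TDiam (TLolli T (TLolli R R))) ->
    typed G (App t (Brace s)) (TLolli R R).

(* Every elimination rule
   other than L^- types the argument in a context disjoint from that of [t1]:
   the selectors tt/ff of ×^- in the empty context, the pair of B^- by ×^+,
   and the curried body of ⊗^- by two ⊸^+. In L^- the argument is [{s}] with
   [s] typed in the empty context; since derivable terms are locally closed
   with free variables in their context, [s] is closed. *)
From mathcomp Require Import all_boot.
From mathcomp Require Import finmap.
Local Open Scope fset_scope.

Lemma lc_at_open_rec k u t : lc_at k (open_rec k u t) -> lc_at k.+1 t.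
Proof.
elim: t k => //= [i k|T b IHb k|a IHa b IHb k|a IHa b IHb k].
- by case: eqP => [->|_ /ltnW].
- exact: IHb.
- by case=> /IHa ? /IHb.
- by case=> /IHa ? /IHb.
Qed.

Lemma fv_open_rec k u t : fv t `<=` fv (open_rec k u t).
Proof. by elim: t k => //= a IHa b IHb k; apply: fsetUSS. Qed.

Lemma fsubsetU1_notin (A B : {fset var}) x :
  A `<=` B `|` [fset x] -> x \notin A -> A `<=` B.
Proof. by move=> AB xA; rewrite -(mem_fsetD1 xA) fsubDset fsetUC. Qed.

Lemma fv_open_rec_sub {G k x t} :
  x \notin fv t -> fv (open_rec k (Fvar x) t) `<=` G `|` [fset x] -> fv t `<=` G.
Proof.
by move=> xt sub; apply: fsubsetU1_notin xt; apply: fsubset_trans sub; apply: fv_open_rec.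
Qed.

Lemma typed_lc_fv G t T : typed G t T -> lc_at 0 t /\ fv t `<=` G.
Proof.
elim=> {G t T} /=.
- by move=> G x xG; rewrite fsub1set.
- by move=> G c; rewrite fsub0set.
- move=> G T R b n nb _ [lcb fvb]; split; first exact: lc_at_open_rec lcb.
  exact: fv_open_rec_sub nb fvb.
- by move=> G1 G2 t s T R _ _ [? fvt] _ [? fvs]; split; last exact: fsetUSS.
- by move=> G t s T R _ [? fvt] _ [? fvs]; rewrite fsubUset fvt fvs.
- by move=> G t T R _ [? fvt]; rewrite fsetU0.
- by move=> G t T R _ [? fvt]; rewrite fsetU0.
- move=> G1 G2 t s r T _ _ [? fvt] _ [? fvs] _ [? fvr]; split=> //.
  by rewrite fsetUSS // fsubUset fvs fvr.
- move=> G1 G2 t b T R S x y _ _ _ _ _ _ xb yb _ [? fvt] _ [lcb fvb].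
  split; first by split; last by do 2 apply: lc_at_open_rec; exact: lcb.
  by rewrite fsetUSS //; exact: fv_open_rec_sub xb (fv_open_rec_sub yb fvb).
- move=> G t s T R _ [? fvt] _ [? fvs]; split=> //.
  by rewrite fsubUset fvt (fsubset_trans fvs (fsub0set _)).
Qed.

Lemma typed_closed t T : typed fset0 t T -> closed_term t.
Proof.
case/typed_lc_fv=> lct fvt; split=> //.
by apply/eqP; rewrite -fsubset0.
Qed.

Lemma typed_Lam G x b R :
  x \notin fv b -> typed (G `|` [fset x]) (open b x) R ->
  typed G (Lam (var_ty x) b) (TLolli (var_ty x) R).
Proof. by case: x => n T; apply: T_LolliI. Qed.

Lemma typed_Lam_Lam G x y b S :
  x \notin fv b -> y \notin fv (open_rec 1 (Fvar x) b) ->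
  typed (G `|` [fset x] `|` [fset y]) (open_rec 0 (Fvar y) (open_rec 1 (Fvar x) b)) S ->
  typed G (Lam (var_ty x) (Lam (var_ty y) b))
    (TLolli (var_ty x) (TLolli (var_ty y) S)).
Proof. by move=> xb yb tb; apply: typed_Lam => //; apply: typed_Lam. Qed.

Theorem lemma2p7 (G : ctx) (t1 t2 : term) (T : ty) :
  typed G (App t1 t2) T ->
  (exists t2', t2 = Brace t2' /\ closed_term t2') \/
  (exists (T' T'' : ty) (G1 G2 : ctx),
      fdisjoint G1 G2 /\ typed G1 t1 T' /\ typed G2 t2 T'').
Proof.
move Eu: (App t1 t2) => u tu; case: tu Eu => //.
- move=> G1 G2 t s T1 R disG tyt tys [-> ->].
  by right; exists (TLolli T1 R), T1, G1, G2.
- move=> G' t T1 R tyt [-> ->]; right; exists (TProd T1 R), TBool, G', fset0.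
  by split; [exact: fdisjointX0 | split; last exact: (T_Const _ Ctt)].
- move=> G' t T1 R tyt [-> ->]; right; exists (TProd T1 R), TBool, G', fset0.
  by split; [exact: fdisjointX0 | split; last exact: (T_Const _ Cff)].
- move=> G1 G2 t s r T1 disG tyt tys tyr [-> ->].
  by right; exists TBool, (TProd T1 T1), G1, G2; do 2 split=> //; apply: T_ProdI.
- move=> G1 G2 t b T1 R S x y disG <- <- _ _ _ xb yb tyt tyb [-> ->].
  right; exists (TTens (var_ty x) (var_ty y)),
    (TLolli (var_ty x) (TLolli (var_ty y) S)), G1, G2.
  by do 2 split=> //; apply: typed_Lam_Lam.
- by move=> G' t s T1 R _ /typed_closed cs [_ ->]; left; exists s.
Qed.
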